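(* Let $X$ be a locally compact space, $Y$ a locally Hausdorff space and $p:X\to Y$ a continuous map all of whose leaves are Hausdorff. Let $L$ be a compact leaf of $p$ which is open in the fiber $p^{-1}(p(L))$. Then for every open neighbourhood $V$ of $L$ in $X$ there exists an open neighbourhood $U\subset V$ of $L$ which is a union of compact leaves of $p$.
   Context: For a continuous map $p:X\to Y$, a leaf of $p$ is a connected component of a fiber $p^{-1}(y)$, $y\in Y$, equipped with the subspace topology from $X$. *)

From HB Require Import structures.
From mathcomp Require Import all_boot all_order.
From mathcomp Require Import all_classical topology.
Set Implicit Arguments. Unset Strict Implicit. Unset Printing Implicit Defensive.
Local Open Scope classical_set_scope.

Definition open_in {T : topologicalType} (A B : set T) : Prop :=
  B `<=` A /\ exists2 O : set T, open O & B = A `&` O.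

Definition hausdorff_subspace {T : topologicalType} (A : set T) : Prop :=
  forall x y, A x -> A y -> x <> y ->
    exists U V : set T, [/\ open U, open V, U x, V y & A `&` U `&` V = set0].

Definition locally_compact_space (T : topologicalType) : Prop :=
  forall (x : T) (V : set T), nbhs x V ->
    exists K : set T, [/\ nbhs x K, compact K & K `<=` V].

Definition locally_hausdorff_space (T : topologicalType) : Prop :=
  forall y : T, exists U : set T, [/\ open U, U y & hausdorff_subspace U].

Definition leaf {X Y : topologicalType} (p : X -> Y) (L : set X) : Prop :=
  exists (y : Y) (x : X), p x = y /\ L = connected_component (p @^-1` [set y]) x.

From HB Require Import structures.
From mathcomp Require Import all_boot all_order.
From mathcomp Require Import all_classical topology.
From mathcomp Require Import finmap.
Set Implicit Arguments. Unset Strict Implicit. Unset Printing Implicit Defensive.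
Local Open Scope classical_set_scope.

(* Write L = p^-1(y) ∩ O with O open, and choose an open Hausdorff N ∋ y.
   By local compactness, L ⊆ W ⊆ K ⊆ O ∩ V ∩ p^-1(N) with W open and K
   compact.  The compact set p(K \ W) lies in the Hausdorff set N and misses
   y, so some neighbourhood O' of y avoids it: over N ∩ O' every fiber meets
   K only inside W.  For x in U := W ∩ p^-1(N ∩ O') with leaf L', the trace
   L' ∩ W = L' ∩ K is compact (fibers are closed in K because N is
   Hausdorff, and components are relatively closed in the fiber), hence
   closed in the Hausdorff leaf L'.  Being also open and non-empty in the
   connected L', it is all of L', so L' ⊆ U and L' is compact. *)

Section HausdorffSubspace.
Context {T : topologicalType}.

Lemma hausdorff_subspace_separate_compact (N S : set T) z :
  hausdorff_subspace N -> compact S -> S `<=` N -> N z -> ~ S z ->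
  exists O : set T, [/\ open O, O z & N `&` O `&` S = set0].
Proof.
move=> hN cS SN Nz nSz; apply: contrapT => noO.
have clSz : closure S z.
  move=> B zB; apply: contrapT => nSB; apply: noO.
  exists B°; split => //; first exact: open_interior.
  apply/seteqP; split=> // w [[_ Bw] Sw]; apply: nSB.
  by exists w; split => //; apply: interior_subset.
have PF : ProperFilter (within S (nbhs z)) by apply: within_nbhs_proper.
have [c [Sc clc]] := cS _ PF (withinT _ _).
have zc : z <> c by move=> zc; apply: nSz; rewrite zc.
have [U [V [oU oV Uz Vc NUV]]] := hN z c Nz (SN _ Sc) zc.
have SU : within S (nbhs z) (U `&` S).
  by apply: filterS (open_nbhs_nbhs (conj oU Uz)) => w Uw Sw.
have [w [[Uw Sw] Vw]] := clc _ _ SU (open_nbhs_nbhs (conj oV Vc)).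
have : (N `&` U `&` V) w by split => //; split => //; apply: SN.
by rewrite NUV.
Qed.

Lemma hausdorff_subspace_compact_closed (C S : set T) :
  hausdorff_subspace C -> compact S -> S `<=` C ->
  exists2 D : set T, closed D & S = C `&` D.
Proof.
move=> hC cS SC.
pose G := \bigcup_(Q in [set Q | open Q /\ C `&` Q `&` S = set0]) Q.
exists (~` G); first by rewrite closedC; apply: bigcup_open => Q [].
apply/seteqP; split.
- move=> s Ss; split; first exact: SC.
  move=> [Q [_ CQS] Qs]; have : (C `&` Q `&` S) s by split => //; split => //; apply: SC.
  by rewrite CQS.
- move=> c [Cc nGc]; apply: contrapT => nSc.
  have [Q [oQ Qc CQS]] := hausdorff_subspace_separate_compact hC cS SC Cc nSc.
  by apply: nGc; exists Q.
Qed.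

Lemma connected_hausdorff_subset_open (C W : set T) :
  connected C -> hausdorff_subspace C -> open W ->
  compact (C `&` W) -> C `&` W !=set0 -> C `<=` W.
Proof.
move=> cC hC oW cCW CW0.
have [D cD CWD] := hausdorff_subspace_compact_closed hC cCW (@subIsetl _ C W).
have CWC : C `&` W = C by apply: cC => //; [exists W | exists D].
by rewrite -CWC => x [].
Qed.

Lemma hausdorff_subspace_closure_set1 (N : set T) y z :
  hausdorff_subspace N -> N y -> N z -> closure [set y] z -> z = y.
Proof.
move=> hN Ny Nz yz; apply: contrapT => zy.
have [U [V [oU oV Uz Vy NUV]]] := hN z y Nz Ny zy.
have [w [-> Uy]] := yz U (open_nbhs_nbhs (conj oU Uz)).
have : (N `&` U `&` V) y by [].
by rewrite NUV.
Qed.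

Lemma connected_between_closure (C D : set T) :
  connected C -> C `<=` D -> D `<=` closure C -> connected D.
Proof.
move=> cC CD DC; apply/connectedP => E [E0 DE [s1 s2]].
have CE : C `<=` E false `|` E true by rewrite -DE.
have [CF|CT] := connected_subset (conj s1 s2) CE cC.
- have [e Ee] := E0 true.
  have : closure (E false) e by apply: (closureS CF); apply: DC; rewrite DE; right.
  by move=> h; have : (closure (E false) `&` E true) e by []; rewrite s1.
- have [e Ee] := E0 false.
  have : closure (E true) e by apply: (closureS CT); apply: DC; rewrite DE; left.
  by move=> h; have : (E false `&` closure (E true)) e by []; rewrite s2.
Qed.

Lemma connected_component_closed_in (A : set T) x :
  A `&` closure (connected_component A x) `<=` connected_component A x.
Proof.
move=> w [Aw Cw].
have [Ax|nAx] := pselect (A x); last first.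
  by move: Cw; rewrite connected_component_out // closure0.
apply: (@connected_component_max _ _ (connected_component A x `|` [set w])).
- by left; apply: connected_component_refl.
- by move=> v [/connected_component_sub //|->].
- apply: (@connected_between_closure (connected_component A x)).
  + exact: component_connected.
  + by move=> v Cv; left.
  + by move=> v [Cv|->] //; apply: subset_closure.
- by right.
Qed.

(* The library's [compact_cover] needs a pointed space. *)
Lemma compact_finite_subcover (I : choiceType) (A : set T) (D : set I)
    (f : I -> set T) :
  compact A -> (forall i, D i -> open (f i)) -> A `<=` cover D f ->
  finite_subset_cover D f A.
Proof.
move=> cA fop Acov; apply: contrapT => nfin.
pose G := filter_from [set D' : {fset I} | {subset D' <= D}]
  (fun D' => A `\` cover [set` D'] f).
have FG : Filter G.
  apply: filter_from_filter; first by exists fset0 => i; rewrite inE.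
  move=> D1 D2 h1 h2; exists (D1 `|` D2)%fset.
    by move=> i; rewrite inE => /orP [/h1|/h2].
  move=> z [Az nc]; split; split => // -[i Di fz]; apply: nc.
    by exists i => //=; rewrite inE Di.
  by exists i => //=; rewrite inE Di orbT.
have PG : ProperFilter G.
  apply: filter_from_proper => // D1 h1; apply: contrapT => ne; apply: nfin.
  by exists D1 => // z Az; apply: contrapT => nc; apply: ne; exists z.
have GA : G A by exists fset0; [move=> i; rewrite inE | move=> ? []].
have [a [Aa cla]] := cA G PG GA.
have [i Di fia] := Acov a Aa.
have Gi : G (A `\` f i).
  exists [fset i]%fset; first by move=> j; rewrite inE => /eqP ->; apply/mem_set.
  by move=> z [Az nc]; split => // fz; apply: nc; exists i => //=; rewrite inE.
by have [w [[_ nfw] fw]] := cla _ _ Gi (open_nbhs_nbhs (conj (fop i Di) fia)).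
Qed.

Lemma compact_nbhs_between (L A : set T) :
  locally_compact_space T -> compact L -> open A -> L `<=` A ->
  exists W K : set T, [/\ open W, compact K, L `<=` W, W `<=` K & K `<=` A].
Proof.
move=> lcT cL oA LA.
have hK x : exists K : set T, [/\ compact K, K `<=` A & A x -> nbhs x K].
  have [Ax|nAx] := pselect (A x); last by exists set0; split => //; exact: compact0.
  have [K [xK cK KA]] := lcT x A (open_nbhs_nbhs (conj oA Ax)).
  by exists K; split.
have [Kf hKf] := choice hK.
have [D' _ LD'] : finite_subset_cover L (fun x => (Kf x)°) L.
  apply: compact_finite_subcover => // [i _|l Ll]; first exact: open_interior.
  by exists l => //; have [_ _] := hKf l; apply; apply: LA.
exists (\bigcup_(i in [set` D']) (Kf i)°), (\bigcup_(i in [set` D']) Kf i).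
split => //.
- by apply: bigcup_open => i _; apply: open_interior.
- by rewrite bigcup_fset; apply: bigsetU_compact => i _; have [] := hKf i.
- by move=> w [i Di Kw]; exists i => //; apply: interior_subset.
- by move=> k [i _ Kk]; have [_ KA _] := hKf i; apply: KA.
Qed.

End HausdorffSubspace.

Section Leaves.
Context {X Y : topologicalType} (p : X -> Y).
Hypothesis p_cont : continuous p.

Lemma compact_fiber_componentI (N : set Y) (K : set X) y x :
  hausdorff_subspace N -> N y -> compact K -> K `<=` p @^-1` N ->
  compact (connected_component (p @^-1` [set y]) x `&` K).
Proof.
move=> hN Ny cK KN; set C := connected_component _ x.
have -> : C `&` K = K `&` (p @^-1` closure [set y] `&` closure C).
  apply/seteqP; split.
  - move=> l [Cl Kl]; split => //; split; last exact: subset_closure.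
    by apply: subset_closure; apply: connected_component_sub Cl.
  - move=> k [Kk [yk Ck]]; split => //; apply: connected_component_closed_in.
    by split => //; apply: hausdorff_subspace_closure_set1 hN Ny (KN _ Kk) yk.
apply: compact_closedI => //; apply: closedI; last exact: closed_closure.
by apply: preimage_closed; [move=> ? _; exact: p_cont | exact: closed_closure].
Qed.

Lemma fiber_component_sub_open (N : set Y) (K W : set X) x :
  hausdorff_subspace N -> compact K -> K `<=` p @^-1` N ->
  open W -> W `<=` K -> W x -> p @^-1` [set p x] `&` K `<=` W ->
  hausdorff_subspace (connected_component (p @^-1` [set p x]) x) ->
  connected_component (p @^-1` [set p x]) x `<=` W /\
  compact (connected_component (p @^-1` [set p x]) x).
Proof.
move=> hN cK KN oW WK Wx fiberKW hC; set C := connected_component _ x.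
have CWK : C `&` W = C `&` K.
  apply/seteqP; split => l [Cl Wl]; split => //; first exact: WK.
  by apply: fiberKW; split => //; apply: connected_component_sub Cl.
have cCW : compact (C `&` W).
  by rewrite CWK; apply: compact_fiber_componentI hN (KN _ (WK _ Wx)) cK KN.
have CW : C `<=` W.
  apply: connected_hausdorff_subset_open => //; first exact: component_connected.
  by exists x; split => //; apply: connected_component_refl.
by rewrite (setIidl CW) in cCW.
Qed.

Lemma nbhs_fiberI_sub_open (N : set Y) (K W : set X) y :
  hausdorff_subspace N -> N y -> compact K -> K `<=` p @^-1` N ->
  open W -> p @^-1` [set y] `&` K `<=` W ->
  exists O : set Y, [/\ open O, O y &
    forall y', (N `&` O) y' -> p @^-1` [set y'] `&` K `<=` W].
Proof.
move=> hN Ny cK KN oW fiberKW; set C := K `&` ~` W.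
have cC : compact C by apply: compact_closedI => //; rewrite closedC.
have cpC : compact (p @` C).
  by apply: continuous_compact => //; apply: continuous_subspaceT.
have pCN : p @` C `<=` N by move=> _ [c [Kc _] <-]; apply: KN.
have npCy : ~ (p @` C) y.
  by move=> [c [Kc nWc] pcy]; apply: nWc; apply: fiberKW.
have [O [oO Oy NOC]] := hausdorff_subspace_separate_compact hN cpC pCN Ny npCy.
exists O; split => // y' [Ny' Oy'] k [pk Kk]; apply: contrapT => nWk.
have : (N `&` O `&` p @` C) y' by split => //; exists k.
by rewrite NOC.
Qed.

Lemma saturated_union_compact_leaves (U : set X) :
  (forall x, U x -> connected_component (p @^-1` [set p x]) x `<=` U /\
                    compact (connected_component (p @^-1` [set p x]) x)) ->
  exists F : set (set X),
    (forall L', F L' -> leaf p L' /\ compact L') /\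
    U = \bigcup_(L' in F) L'.
Proof.
move=> hU; exists [set L' | [/\ leaf p L', compact L' & L' `<=` U]].
split; first by move=> L' [].
apply/seteqP; split; last by move=> x [L' [_ _ LU] L'x]; apply: LU.
move=> x Ux; have [CU cC] := hU x Ux.
exists (connected_component (p @^-1` [set p x]) x).
  by split => //; exists (p x), x.
exact: connected_component_refl.
Qed.

End Leaves.

Theorem theorem3p3 (X Y : topologicalType) (p : X -> Y) :
  locally_compact_space X ->
  locally_hausdorff_space Y ->
  continuous p ->
  (forall L : set X, leaf p L -> hausdorff_subspace L) ->
  forall L : set X, leaf p L -> compact L ->
  open_in (p @^-1` (p @` L)) L ->
  forall V : set X, open V -> L `<=` V ->
  exists U : set X, [/\ open U, L `<=` U, U `<=` V &
    exists F : set (set X),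
      (forall L', F L' -> leaf p L' /\ compact L') /\
      U = \bigcup_(L' in F) L'].
Proof.
move=> lcX lhY p_cont leafH L [_ [x0 [<- Ldef]]] cL [_ [O oO LE]] V oV LV.
have pL l : L l -> p l = p x0 by rewrite Ldef => /connected_component_sub.
have fiberOL k : O k -> p k = p x0 -> L k.
  move=> Ok pk; rewrite LE; split => //; exists x0; last by rewrite pk.
  by rewrite Ldef; apply: connected_component_refl.
have [N [oN Nx0 hN]] := lhY (p x0).
have oA : open (O `&` V `&` p @^-1` N).
  by apply: openI; [apply: openI | apply: (continuousP _).1].
have LA : L `<=` O `&` V `&` p @^-1` N.
  move=> l Ll; split; last by rewrite /= pL.
  by split; [move: Ll; rewrite LE => -[] | apply: LV].
have [W [K [oW cK LW WK KA]]] := compact_nbhs_between lcX cL oA LA.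
have KN : K `<=` p @^-1` N by move=> k /KA [].
have fiberKW : p @^-1` [set p x0] `&` K `<=` W.
  by move=> k [pk /KA [[Ok _] _]]; apply: LW; apply: fiberOL.
have [O' [oO' O'x0 fiberK'W]] :=
  nbhs_fiberI_sub_open p_cont hN Nx0 cK KN oW fiberKW.
exists (W `&` p @^-1` (N `&` O')); split.
- by apply: openI => //; apply: (continuousP _).1 => //; apply: openI.
- by move=> l Ll; split; [apply: LW | rewrite /= pL].
- by move=> u [/WK/KA [[_ Vu] _] _].
apply: saturated_union_compact_leaves => x [Wx NO'x].
have leafC : leaf p (connected_component (p @^-1` [set p x]) x).
  by exists (p x), x.
have [CW cC] := fiber_component_sub_open p_cont hN cK KN oW WK Wx
  (fiberK'W _ NO'x) (leafH _ leafC).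
split => // l Cl; split; first exact: CW.
by rewrite /= (connected_component_sub Cl).
Qed.
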